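(* Let $\mathbb{F}$ be a field with $\operatorname{char}\mathbb{F}\ne 2,3$, let $2\le m,n<\infty$, and let $P$ be an $n\times m$ matrix over $\mathbb{F}$ with $\operatorname{rank}P=r\ge 2$. Then the Munn algebra $\mathcal{A}=\mathfrak{M}(\mathbb{F}, m, n, P)$ is zero Jordan product determined.
   Context: $\mathfrak{M}(\mathbb{F}, m, n, P)$ is the $\mathbb{F}$-algebra of all $m\times n$ matrices over $\mathbb{F}$ with entrywise addition and scalar multiplication and product $A\bullet B=APB$. The Jordan product is $x\circ y = x\bullet y + y\bullet x$. An associative $\mathbb{F}$-algebra $\mathcal{A}$ is zero Jordan product determined if for every bilinear functional $\phi:\mathcal{A}\times\mathcal{A}\to\mathbb{F}$ such that $x\circ y=0$ implies $\phi(x,y)=0$ for all $x,y\in\mathcal{A}$, there exists a linear functional $\tau$ on $\mathcal{A}$ with $\phi(x,y)=\tau(x\circ y)$ for all $x,y\in\mathcal{A}$. *)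

From mathcomp Require Import all_boot all_order all_algebra.
Set Implicit Arguments. Unset Strict Implicit. Unset Printing Implicit Defensive.
Import GRing.Theory.
Local Open Scope ring_scope.

Definition munn_mul (F : fieldType) (m n : nat) (P : 'M[F]_(n, m))
  (A B : 'M[F]_(m, n)) : 'M[F]_(m, n) := A *m P *m B.

Definition munn_jordan (F : fieldType) (m n : nat) (P : 'M[F]_(n, m))
  (A B : 'M[F]_(m, n)) : 'M[F]_(m, n) := munn_mul P A B + munn_mul P B A.

Definition bilinear_functional (F : fieldType) (V : lmodType F)
  (phi : V -> V -> F) : Prop :=
  (forall (a : F) (x1 x2 y : V), phi (a *: x1 + x2) y = a * phi x1 y + phi x2 y) /\
  (forall (a : F) (x y1 y2 : V), phi x (a *: y1 + y2) = a * phi x y1 + phi x y2).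

Definition linear_functional (F : fieldType) (V : lmodType F)
  (tau : V -> F) : Prop :=
  forall (a : F) (x y : V), tau (a *: x + y) = a * tau x + tau y.

Definition munn_zero_jordan_product_determined (F : fieldType) (m n : nat)
  (P : 'M[F]_(n, m)) : Prop :=
  forall phi : 'M[F]_(m, n) -> 'M[F]_(m, n) -> F,
    bilinear_functional phi ->
    (forall x y, munn_jordan P x y = 0 -> phi x y = 0) ->
    exists tau : 'M[F]_(m, n) -> F,
      linear_functional tau /\ forall x y, phi x y = tau (munn_jordan P x y).

From mathcomp Require Import all_boot all_order all_algebra.
From mathcomp Require Import ring zify.
Set Implicit Arguments. Unset Strict Implicit. Unset Printing Implicit Defensive.
Import GRing.Theory.
Local Open Scope ring_scope.

(* Write P = L Q U with L, U invertible and Q = pid_mx r, r = rank P.  The map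
   x |-> U x L carries the Jordan product of M(F, m, n, P) to that of
   M(F, m, n, Q), so it suffices to treat Q, whose matrix units multiply as
   e_ab . e_cd = [b = c < r] e_ad.  If phi vanishes on pairs with zero Jordan
   product, then phi(x, y) = phi(y, x) whenever x o x = y o y = 0, and testing
   phi on a few explicit pairs of combinations of matrix units shows that
   phi(e_ab, e_cd) depends only on e_ab o e_cd.  This defines tau on matrix
   units, and bilinearity extends phi = tau o (o) to all matrices. *)

Section LinearFunctional.
Variables (F : fieldType) (V : lmodType F) (f : V -> F).
Hypothesis f_lin : linear_functional f.

Lemma linear_functionalD x y : f (x + y) = f x + f y.
Proof. by rewrite -{1}[x]scale1r f_lin mul1r. Qed.

Lemma linear_functional0 : f 0 = 0.
Proof. by apply: (@addrI _ (f 0)); rewrite -linear_functionalD !addr0. Qed.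

Lemma linear_functionalZ a x : f (a *: x) = a * f x.
Proof. by rewrite -[a *: x]addr0 f_lin linear_functional0 addr0. Qed.

Lemma linear_functionalN x : f (- x) = - f x.
Proof. by rewrite -scaleN1r linear_functionalZ mulN1r. Qed.

Lemma linear_functional_sum I r (P : pred I) (g : I -> V) :
  f (\sum_(i <- r | P i) g i) = \sum_(i <- r | P i) f (g i).
Proof. exact: (big_morph f linear_functionalD linear_functional0). Qed.

End LinearFunctional.

Lemma linear_functional_mx_expand (F : fieldType) m n (f : 'M[F]_(m, n) -> F) :
  linear_functional f -> forall A, f A = \sum_i \sum_j A i j * f (delta_mx i j).
Proof.
move=> f_lin A; rewrite {1}(matrix_sum_delta A) linear_functional_sum //.
apply: eq_bigr => i _; rewrite linear_functional_sum //.
by apply: eq_bigr => j _; rewrite linear_functionalZ.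
Qed.

Section Bilinear.
Variables (F : fieldType) (V : lmodType F) (beta : V -> V -> F).
Hypothesis beta_bil : bilinear_functional beta.

Lemma bilinear_functionalL y : linear_functional (beta^~ y).
Proof. by case: beta_bil => + _ a x1 x2; apply. Qed.

Lemma bilinear_functionalR x : linear_functional (beta x).
Proof. by case: beta_bil => _ + a y1 y2; apply. Qed.

Lemma bilinearDl x1 x2 y : beta (x1 + x2) y = beta x1 y + beta x2 y.
Proof. exact: linear_functionalD (bilinear_functionalL y) x1 x2. Qed.

Lemma bilinearNl x y : beta (- x) y = - beta x y.
Proof. exact: linear_functionalN (bilinear_functionalL y) x. Qed.

Lemma bilinearDr x y1 y2 : beta x (y1 + y2) = beta x y1 + beta x y2.
Proof. exact: linear_functionalD (bilinear_functionalR x) y1 y2. Qed.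

Lemma bilinearNr x y : beta x (- y) = - beta x y.
Proof. exact: linear_functionalN (bilinear_functionalR x) y. Qed.

End Bilinear.

Lemma bilinear_functional_mx_eq (F : fieldType) m n
    (b1 b2 : 'M[F]_(m, n) -> 'M[F]_(m, n) -> F) :
  bilinear_functional b1 -> bilinear_functional b2 ->
  (forall i j k l, b1 (delta_mx i j) (delta_mx k l) = b2 (delta_mx i j) (delta_mx k l)) ->
  forall x y, b1 x y = b2 x y.
Proof.
move=> b1_bil b2_bil eq_delta x y.
rewrite (linear_functional_mx_expand (bilinear_functionalL b1_bil y)).
rewrite (linear_functional_mx_expand (bilinear_functionalL b2_bil y)).
apply: eq_bigr => i _; apply: eq_bigr => j _; congr (_ * _).
rewrite (linear_functional_mx_expand (bilinear_functionalR b1_bil _)).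
rewrite (linear_functional_mx_expand (bilinear_functionalR b2_bil _)).
by apply: eq_bigr => k _; apply: eq_bigr => l _; rewrite eq_delta.
Qed.

Section MunnJordan.
Variables (F : fieldType) (m n : nat) (P : 'M[F]_(n, m)).
Local Notation J := (munn_jordan P).

Lemma munn_jordanC x y : J x y = J y x.
Proof. by rewrite /munn_jordan addrC. Qed.

Lemma munn_jordanDl x1 x2 y : J (x1 + x2) y = J x1 y + J x2 y.
Proof. by rewrite /munn_jordan /munn_mul !mulmxDl !mulmxDr addrACA. Qed.

Lemma munn_jordanNl x y : J (- x) y = - J x y.
Proof. by rewrite /munn_jordan /munn_mul !mulNmx !mulmxN opprD. Qed.

Lemma munn_jordanZl a x y : J (a *: x) y = a *: J x y.
Proof. by rewrite /munn_jordan /munn_mul -!scalemxAl -!scalemxAr scalerDr. Qed.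

Lemma munn_jordanDr x y1 y2 : J x (y1 + y2) = J x y1 + J x y2.
Proof. by rewrite munn_jordanC munn_jordanDl !(munn_jordanC x). Qed.

Lemma munn_jordanNr x y : J x (- y) = - J x y.
Proof. by rewrite munn_jordanC munn_jordanNl munn_jordanC. Qed.

Lemma munn_jordanZr a x y : J x (a *: y) = a *: J x y.
Proof. by rewrite munn_jordanC munn_jordanZl munn_jordanC. Qed.

Lemma munn_jordan_equiv (L : 'M_n) (U : 'M_m) x y :
  U *m munn_jordan (L *m P *m U) x y *m L = J (U *m x *m L) (U *m y *m L).
Proof. by rewrite /munn_jordan /munn_mul mulmxDr mulmxDl !mulmxA. Qed.

Section ZeroJordan.
Variable phi : 'M[F]_(m, n) -> 'M[F]_(m, n) -> F.
Hypothesis phi_bil : bilinear_functional phi.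
Hypothesis phi_J0 : forall x y, J x y = 0 -> phi x y = 0.

Lemma zero_jordan_sym x y : J x x = 0 -> J y y = 0 -> phi x y = phi y x.
Proof.
move=> Jxx0 Jyy0; apply/eqP; rewrite -subr_eq0; apply/eqP.
have Jxy0 : J (x + y) (y - x) = 0.
  rewrite munn_jordanDl !munn_jordanDr !munn_jordanNr Jxx0 Jyy0 (munn_jordanC y x).
  by rewrite oppr0 addr0 add0r subrr.
rewrite -(phi_J0 Jxy0) bilinearDl // !bilinearDr // !bilinearNr //.
by rewrite (phi_J0 Jxx0) (phi_J0 Jyy0) oppr0 addr0 add0r.
Qed.

End ZeroJordan.
End MunnJordan.

Lemma munn_zero_jordan_product_determined_equiv (F : fieldType) m n (P : 'M[F]_(n, m))
    (L : 'M[F]_n) (U : 'M[F]_m) :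
  L \in unitmx -> U \in unitmx -> munn_zero_jordan_product_determined P ->
  munn_zero_jordan_product_determined (L *m P *m U).
Proof.
move=> L_unit U_unit P_zjpd phi phi_bil phi_J0.
pose g (X : 'M[F]_(m, n)) := U *m X *m L.
pose h (X : 'M[F]_(m, n)) := invmx U *m X *m invmx L.
have hK X : h (g X) = X by rewrite /h /g !mulmxA mulmxK // mulVmx // mul1mx.
have gK X : g (h X) = X by rewrite /h /g !mulmxA mulmxKV // mulmxV // mul1mx.
have gJ X Y : g (munn_jordan (L *m P *m U) X Y) = munn_jordan P (g X) (g Y).
  exact: munn_jordan_equiv.
have lin_g a X Y : g (a *: X + Y) = a *: g X + g Y.
  by rewrite /g mulmxDr mulmxDl -scalemxAr -scalemxAl.
have lin_h a X Y : h (a *: X + Y) = a *: h X + h Y.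
  by rewrite /h mulmxDr mulmxDl -scalemxAr -scalemxAl.
have psi_bil : bilinear_functional (fun X Y => phi (h X) (h Y)).
  by case: phi_bil => phiL phiR; split=> a X1 X2 Y; rewrite lin_h ?phiL ?phiR.
have psi_J0 X Y : munn_jordan P X Y = 0 -> phi (h X) (h Y) = 0.
  move=> JXY0; apply: phi_J0; rewrite -[LHS]hK gJ !gK JXY0.
  by rewrite /h mulmx0 mul0mx.
have [tau [tau_lin phi_tau]] := P_zjpd _ psi_bil psi_J0.
exists (fun Z => tau (g Z)); split=> [a X Y|X Y]; first by rewrite lin_g tau_lin.
by rewrite -{1}[X]hK -{1}[Y]hK phi_tau gJ.
Qed.

Lemma sum_ord_indicator (R : nzSemiRingType) k b (f : nat -> R) (F : 'I_k -> R) :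
  (forall i : 'I_k, F i = (i == b :> nat)%:R * f i) ->
  \sum_(i < k) F i = (b < k)%:R * f b.
Proof.
move=> eF; rewrite (eq_bigr (fun i : 'I_k => if i == b :> nat then f i else 0)).
  by rewrite -big_mkcond big_ord1_eq mulr_natl mulrb.
by move=> i _; rewrite eF mulr_natl mulrb.
Qed.

Arguments sum_ord_indicator {R k} b f {F}.

Section NatDelta.
Variable R : comNzRingType.

(* Matrix units indexed by nat, and zero when an index is out of range, so that
   one index can serve as a column of one factor and a row of the other. *)
Definition ndelta {p q} (a b : nat) : 'M[R]_(p, q) :=
  \matrix_(i, j) ((i == a :> nat)%:R * (j == b :> nat)%:R).

Lemma delta_mx_ndelta p q (i : 'I_p) (j : 'I_q) : delta_mx i j = ndelta i j.
Proof. by apply/matrixP => x y; rewrite !mxE -natrM mulnb. Qed.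

Lemma mul_ndelta p k q a b c d :
  ndelta a b *m (ndelta c d : 'M_(k, q)) =
    ((b == c) && (b < k)%N)%:R *: ndelta a d :> 'M_(p, q).
Proof.
apply/matrixP => x y; rewrite !mxE.
rewrite (sum_ord_indicator b
  (fun l => (x == a :> nat)%:R * (l == c :> nat)%:R * (y == d :> nat)%:R)) => [|l].
  by rewrite -mulnb natrM; ring.
by rewrite !mxE; ring.
Qed.

Lemma mul_ndelta_pid p n m r a b : (r <= n)%N ->
  ndelta a b *m (pid_mx r : 'M_(n, m)) = (b < r)%:R *: ndelta a b :> 'M_(p, m).
Proof.
move=> rn; apply/matrixP => x y; rewrite !mxE.
rewrite (sum_ord_indicator b
  (fun l => (x == a :> nat)%:R * ((l == y :> nat) && (l < r)%N)%:R)) => [|l].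
  case: (ltnP b r) => [br|_]; last by rewrite andbF /= !(mulr0, mul0r).
  by rewrite (leq_trans br rn) andbT [b == _]eq_sym /= !mul1r.
by rewrite !mxE; ring.
Qed.
End NatDelta.

Lemma exists_lt_neq2 r j k : (1 < r)%N -> ~~ ((j < r) && (k < r))%N ->
  exists p, [/\ (p < r)%N, p != j & p != k].
Proof.
move=> r_gt1 jk_out; have [j0|j_neq0] := eqVneq j 0%N.
  by exists 1%N; move: jk_out; rewrite j0 (ltnW r_gt1) /=; split; lia.
have [k0|k_neq0] := eqVneq k 0%N; first by exists 1%N; move: jk_out; rewrite k0; split; lia.
by exists 0%N; split; rewrite 1?eq_sym // ltnW.
Qed.

Section PidMunn.
Variables (F : fieldType) (m n r : nat).
Hypotheses (r_le_n : (r <= n)%N) (r_le_m : (r <= m)%N).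
Local Notation J := (munn_jordan (pid_mx r : 'M[F]_(n, m))).
Local Notation E := (@ndelta F m n).

Lemma munn_jordan_pid_ndelta a b c d : J (E a b) (E c d) =
  ((b == c) && (b < r)%N)%:R *: E a d + ((d == a) && (a < r)%N)%:R *: E c b.
Proof.
have munn_mul_ndelta x y z w :
    munn_mul (pid_mx r) (E x y) (E z w) = ((y == z) && (y < r)%N)%:R *: E x w.
  rewrite /munn_mul mul_ndelta_pid // -scalemxAl mul_ndelta scalerA -natrM mulnb.
  by case: (ltnP y r) => [/leq_trans/(_ r_le_m)->|]; rewrite ?andbT ?andbF.
by rewrite /munn_jordan !munn_mul_ndelta; case: (d =P a) => [->|].
Qed.

Lemma munn_jordan_pid_ndelta_sqr a b : a != b -> J (E a b) (E a b) = 0.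
Proof.
by rewrite eq_sym => /negbTE ba; rewrite munn_jordan_pid_ndelta ba /= !scale0r addr0.
Qed.


Section ZeroJordanPid.
Variable phi : 'M[F]_(m, n) -> 'M[F]_(m, n) -> F.
Hypothesis phi_bil : bilinear_functional phi.
Hypothesis phi_J0 : forall x y, J x y = 0 -> phi x y = 0.

Local Ltac expand_jordan :=
  rewrite !(munn_jordanDl, munn_jordanDr, munn_jordanNl, munn_jordanNr) !munn_jordan_pid_ndelta.
Local Ltac expand_phi :=
  rewrite !(bilinearDl phi_bil, bilinearDr phi_bil, bilinearNl phi_bil, bilinearNr phi_bil).
Local Ltac mx_ring := rewrite ?scale0r ?scale1r; apply/matrixP => ? ?; rewrite !mxE /=; ring.

Lemma phi_ndelta_eq0 a b c d :
  ~~ ((b == c) && (b < r)%N) -> ~~ ((d == a) && (a < r)%N) -> phi (E a b) (E c d) = 0.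
Proof.
move=> /negbTE bc /negbTE da; apply: phi_J0.
by rewrite munn_jordan_pid_ndelta bc da !scale0r addr0.
Qed.

Lemma phi_ndelta_inner i l p q : (p < r)%N -> (q < r)%N -> ~~ ((l == i) && (i < r)%N) ->
  phi (E i p) (E p l) = phi (E i q) (E q l).
Proof.
move=> p_lt_r q_lt_r li; have [<-//|pq] := eqVneq p q; have qp : q != p by rewrite eq_sym.
have J0 : J (E i p + E i q) (E p l - E q l) = 0.
  expand_jordan; rewrite (negbTE li) (negbTE pq) (negbTE qp) !eqxx p_lt_r q_lt_r /=.
  by mx_ring.
have := phi_J0 J0; expand_phi.
rewrite (phi_ndelta_eq0 (b := p) (c := q)) ?(negbTE pq) //.
rewrite (phi_ndelta_eq0 (b := q) (c := p)) ?(negbTE qp) // => h.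
by apply/eqP; rewrite -subr_eq0 -h; apply/eqP; ring.
Qed.

Lemma phi_ndelta_outer j k p q : (p < r)%N -> (q < r)%N -> ~~ ((j == k) && (j < r)%N) ->
  phi (E p j) (E k p) = phi (E q j) (E k q).
Proof.
move=> p_lt_r q_lt_r jk; have [<-//|pq] := eqVneq p q; have qp : q != p by rewrite eq_sym.
have J0 : J (E p j - E q j) (E k p + E k q) = 0.
  expand_jordan; rewrite (negbTE jk) (negbTE pq) (negbTE qp) !eqxx p_lt_r q_lt_r /=.
  by mx_ring.
have := phi_J0 J0; expand_phi.
rewrite (phi_ndelta_eq0 (a := p) (d := q)) ?(negbTE qp) //.
rewrite (phi_ndelta_eq0 (a := q) (d := p)) ?(negbTE pq) // => h.
by apply/eqP; rewrite -subr_eq0 -h; apply/eqP; ring.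
Qed.

Hypothesis r_gt1 : (1 < r)%N.
Hypothesis two_neq0 : 2%:R != 0 :> F.

Let r_gt0 : (0 < r)%N := ltnW r_gt1.

Lemma phi_ndelta_swap0_block j k : (j < r)%N -> (k < r)%N -> j != k ->
  phi (E 0 j) (E k 0) = phi (E k 0) (E 0 j).
Proof.
move=> j_lt_r k_lt_r jk; have kj : k != j by rewrite eq_sym.
have jk_out : ~~ ((j == k) && (j < r)%N) by rewrite (negbTE jk).
have jk_out' : ~~ ((j == k) && (k < r)%N) by rewrite (negbTE jk).
(* On rows and columns j, k this is the square-zero matrix [[1, 1], [-1, -1]]. *)
have J0 : J (E j j + E j k - E k j - E k k) (E j j + E j k - E k j - E k k) = 0.
  by expand_jordan; rewrite (negbTE jk) (negbTE kj) !eqxx j_lt_r k_lt_r /=; mx_ring.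
have := zero_jordan_sym phi_bil phi_J0 J0 (munn_jordan_pid_ndelta_sqr kj).
expand_phi.
rewrite (phi_ndelta_outer j_lt_r r_gt0 jk_out) (phi_ndelta_outer k_lt_r r_gt0 jk_out).
rewrite (phi_ndelta_inner k_lt_r r_gt0 jk_out') (phi_ndelta_inner j_lt_r r_gt0 jk_out').
rewrite (zero_jordan_sym phi_bil phi_J0
  (munn_jordan_pid_ndelta_sqr jk) (munn_jordan_pid_ndelta_sqr kj)).
set U := phi (E 0 j) (E k 0); set V := phi (E k 0) (E 0 j).
set X := phi (E k j) (E j k); set W := phi (E k j) (E k j) => h.
apply: (mulIf two_neq0); apply/eqP; rewrite -subr_eq0.
have -> : U * 2%:R - V * 2%:R = (U + X - W - V) - (V + X - W - U) by ring.
by rewrite h subrr.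
Qed.

Lemma phi_ndelta_swap0 j k : ~~ ((j == k) && (j < r)%N) ->
  phi (E 0 j) (E k 0) = phi (E k 0) (E 0 j).
Proof.
move=> jk_out; have [/andP[j_lt_r k_lt_r]|jk_big] := boolP ((j < r) && (k < r))%N.
  by apply: phi_ndelta_swap0_block => //; move: jk_out; rewrite j_lt_r andbT.
have [p [p_lt_r pj pk]] := exists_lt_neq2 r_gt1 jk_big.
have jk_out' : ~~ ((j == k) && (k < r)%N) by case: eqP jk_out => [->|].
rewrite (phi_ndelta_outer r_gt0 p_lt_r jk_out) (phi_ndelta_inner r_gt0 p_lt_r jk_out').
by apply: (zero_jordan_sym phi_bil phi_J0); apply: munn_jordan_pid_ndelta_sqr; rewrite // eq_sym.
Qed.

Lemma phi_ndelta_diag i j : (i < r)%N -> (j < r)%N -> i != j ->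
  phi (E i j) (E j i) *+ 2 = phi (E i i) (E i i) + phi (E j j) (E j j).
Proof.
move=> i_lt_r j_lt_r ij; have ji : j != i by rewrite eq_sym.
have J0 : J (E i i + E i j + E j i + E j j) (E i i - E i j - E j i + E j j) = 0.
  by expand_jordan; rewrite (negbTE ij) (negbTE ji) !eqxx i_lt_r j_lt_r /=; mx_ring.
have := phi_J0 J0; expand_phi.
rewrite !(@phi_ndelta_eq0 i i j j) ?(negbTE ij) ?(negbTE ji) //.
rewrite !(@phi_ndelta_eq0 j j i i) ?(negbTE ij) ?(negbTE ji) //.
rewrite !(@phi_ndelta_eq0 i j i j) ?(negbTE ij) ?(negbTE ji) //.
rewrite !(@phi_ndelta_eq0 j i j i) ?(negbTE ij) ?(negbTE ji) //.
have ji_out : ~~ ((j == i) && (i < r)%N) by rewrite (negbTE ji).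
have ij_out : ~~ ((i == j) && (j < r)%N) by rewrite (negbTE ij).
have ji_out' : ~~ ((j == i) && (j < r)%N) by rewrite (negbTE ji).
have ij_out' : ~~ ((i == j) && (i < r)%N) by rewrite (negbTE ij).
rewrite (phi_ndelta_inner i_lt_r j_lt_r ji_out) (phi_ndelta_inner i_lt_r j_lt_r ij_out).
rewrite (phi_ndelta_outer i_lt_r j_lt_r ji_out') (phi_ndelta_outer j_lt_r i_lt_r ij_out').
rewrite (zero_jordan_sym phi_bil phi_J0
  (munn_jordan_pid_ndelta_sqr ji) (munn_jordan_pid_ndelta_sqr ij)).
by move=> h; apply/eqP; rewrite eq_sym -subr_eq0 -h; apply/eqP; ring.
Qed.

(* tau(e_ab) is read off a factorisation of e_ab as a Jordan product:
   e_aa o e_aa = 2 e_aa when a < r, and e_ab = e_a0 o e_0b otherwise. *)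
Definition jordan_coef a b :=
  if (a == b) && (a < r)%N then phi (E a a) (E a a) / 2%:R else phi (E a 0) (E 0 b).

Definition jordan_tau (X : 'M[F]_(m, n)) := \sum_i \sum_j X i j * jordan_coef i j.

Lemma jordan_tau_linear : linear_functional jordan_tau.
Proof.
move=> a X Y; rewrite /jordan_tau mulr_sumr -big_split; apply: eq_bigr => i _.
by rewrite mulr_sumr -big_split; apply: eq_bigr => j _; rewrite !mxE mulrDl mulrA.
Qed.

Lemma jordan_tau_delta i j : jordan_tau (delta_mx i j) = jordan_coef i j.
Proof.
rewrite /jordan_tau (bigD1 i) //= [X in _ + X]big1 => [|i' i'i]; last first.
  by apply: big1 => j' _; rewrite mxE (negbTE i'i) mul0r.
rewrite addr0 (bigD1 j) //= [X in _ + X]big1 => [|j' j'j]; last first.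
  by rewrite mxE (negbTE j'j) andbF mul0r.
by rewrite mxE !eqxx mul1r addr0.
Qed.

Lemma phi_ndelta a b c d : phi (E a b) (E c d) =
  ((b == c) && (b < r)%N)%:R * jordan_coef a d +
  ((d == a) && (a < r)%N)%:R * jordan_coef c b.
Proof.
rewrite /jordan_coef.
case bc: ((b == c) && (b < r)%N); case da: ((d == a) && (a < r)%N); rewrite /= ?mul1r ?mul0r.
- move: bc da => /andP[/eqP<- b_lt_r] /andP[/eqP-> a_lt_r].
  rewrite !eqxx a_lt_r b_lt_r /= -mulrDl; have [<-|ab] := eqVneq a b.
    by rewrite -mulr2n -[_ *+ 2]mulr_natr mulfK.
  by rewrite -phi_ndelta_diag // -[_ *+ 2]mulr_natr mulfK.
- move: bc => /andP[/eqP<- b_lt_r]; rewrite addr0 eq_sym da.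
  exact: phi_ndelta_inner r_gt0 (negbT da).
- move: da => /andP[/eqP-> a_lt_r]; rewrite add0r.
  have cb : ((c == b) && (c < r)%N) = false.
    by case: (c =P b) bc => [->|]; rewrite ?eqxx.
  by rewrite cb (phi_ndelta_outer a_lt_r r_gt0 (negbT bc)) phi_ndelta_swap0 ?bc.
- by rewrite addr0 phi_ndelta_eq0 ?bc ?da.
Qed.

Lemma phi_jordan_tau x y : phi x y = jordan_tau (J x y).
Proof.
apply: (bilinear_functional_mx_eq (b2 := fun u v => jordan_tau (J u v))) => // [|i j k l].
  split=> a x1 x2 y1.
    by rewrite munn_jordanDl munn_jordanZl jordan_tau_linear.
  by rewrite munn_jordanDr munn_jordanZr jordan_tau_linear.
rewrite !delta_mx_ndelta phi_ndelta munn_jordan_pid_ndelta.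
rewrite (linear_functionalD jordan_tau_linear) !(linear_functionalZ jordan_tau_linear).
by rewrite -!delta_mx_ndelta !jordan_tau_delta.
Qed.

End ZeroJordanPid.
End PidMunn.

Lemma pid_munn_zero_jordan_product_determined (F : fieldType) m n r :
  (1 < r)%N -> (r <= n)%N -> (r <= m)%N -> 2%:R != 0 :> F ->
  munn_zero_jordan_product_determined (pid_mx r : 'M[F]_(n, m)).
Proof.
move=> r_gt1 r_le_n r_le_m two_neq0 phi phi_bil phi_J0.
exists (jordan_tau r phi); split; first exact: jordan_tau_linear.
exact: phi_jordan_tau.
Qed.

Theorem theorem3p5 (F : fieldType) (m n : nat) (P : 'M[F]_(n, m)) :
  ~~ (2%N \in [pchar F]) -> ~~ (3%N \in [pchar F]) ->
  (2 <= m)%N -> (2 <= n)%N -> (2 <= \rank P)%N ->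
  munn_zero_jordan_product_determined P.
Proof.
move=> char_neq2 _ _ _ rank_ge2.
rewrite -(mulmx_ebase P); apply: munn_zero_jordan_product_determined_equiv.
- exact: col_ebase_unit.
- exact: row_ebase_unit.
apply: pid_munn_zero_jordan_product_determined.
- exact: rank_ge2.
- exact: rank_leq_row.
- exact: rank_leq_col.
- by move: char_neq2; rewrite inE.
Qed.
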